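(* Let $n\ge 2$, let $\Delta=\{1,2,\dots,n+1\}$ and let $P$ be a partition of $\{1,\dots,n+1\}$. Then there exists a strongly connected closed simplicial complex of type $\{3,4\}$ containing $\Delta$ as an $n$-face whose characteristic partition at $\Delta$ equals $P$, and any two such complexes are isomorphic by an isomorphism fixing each of $1,\dots,n+1$. Moreover, in any strongly connected closed simplicial complex of type $\{3,4\}$, the characteristic partitions at any two $n$-faces have the same multiset of part sizes.
   Context: An (abstract) simplicial complex of dimension $n$ is a family of finite nonempty sets closed under taking nonempty subsets and under nonempty intersections, whose maximal members (the $n$-faces or facets) all have cardinality $n+1$; a $k$-face is a member of cardinality $k+1$. It is closed if every $(n-1)$-face lies in exactly two $n$-faces. It is strongly connected if any two $n$-faces can be joined by a sequence of $n$-faces in which consecutive ones share an $(n-1)$-face. For an $(n-2)$-face $F$, every $n$-face $F'\supseteq F$ is $F\cup e$ for a unique $2$-set $e$; the link of $F$ is the graph formed by these edges $e$. A closed simplicial complex is of type $\{3,4\}$ if every $(n-2)$-face lies in exactly $3$ or $4$ $n$-faces (then its link is a single cycle of length $l(F)\in\{3,4\}$). Characteristic partition: in a closed complex of type $\{3,4\}$, let $\Delta=\{v_1,\dots,v_{n+1}\}$ be an $n$-face; for each $i$ let $\Delta_i$ be the unique $n$-face other than $\Delta$ containing $\Delta\setminus\{v_i\}$ and let $v_i'$ be the vertex of $\Delta_i$ not in $\Delta$. Declare $i\sim j$ iff $i=j$ or $v_i'=v_j'$ (equivalently $l(\Delta\setminus\{v_i,v_j\})=3$); this is an equivalence relation on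 $\{1,\dots,n+1\}$ and its classes form the characteristic partition at $\Delta$. Two complexes are isomorphic if there is a bijection between their vertex sets mapping faces exactly onto faces. *)

From mathcomp Require Import all_boot.
From mathcomp Require Import finmap.
From Stdlib Require Import Relations.Relation_Operators.

Set Implicit Arguments.
Unset Strict Implicit.
Unset Printing Implicit Defensive.

Local Open Scope fset_scope.

Section Complexes.
Variable V : choiceType.
Implicit Types (K : {fset V} -> Prop) (F G : {fset V}).

Definition is_complex (n : nat) K : Prop :=
  [/\ forall F, K F -> F != fset0,
      forall F G, K F -> G `<=` F -> G != fset0 -> K G,
      forall F G, K F -> K G -> F `&` G != fset0 -> K (F `&` G),
      forall F, K F -> #|` F| <= n.+1 &
      forall F, K F -> exists2 G, K G & (F `<=` G) && (#|` G| == n.+1)].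

Definition facet (n : nat) K F : Prop := K F /\ #|` F| = n.+1.

Definition nfacets_containing (n : nat) K F (k : nat) : Prop :=
  exists S : {fset {fset V}},
    (forall G, G \in S <-> (facet n K G /\ F `<=` G)) /\ #|` S| = k.

Definition closed_complex (n : nat) K : Prop :=
  is_complex n K /\
  forall F, K F -> #|` F| = n -> nfacets_containing n K F 2.

Definition type34 (n : nat) K : Prop :=
  closed_complex n K /\
  forall F, K F -> #|` F| = n.-1 ->
    nfacets_containing n K F 3 \/ nfacets_containing n K F 4.

Definition adjacent (n : nat) K F G : Prop :=
  facet n K F /\ facet n K G /\ #|` (F `&` G)| = n.

Definition strongly_connected (n : nat) K : Prop :=
  forall F G, facet n K F -> facet n K G ->
    clos_refl_trans {fset V} (adjacent n K) F G.

Definition scc34 (n : nat) K : Prop := type34 n K /\ strongly_connected n K.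

Definition char_rel (n : nat) K (D : {fset V}) (v w : V) : Prop :=
  v = w \/
  exists x : V, x \notin D /\
    facet n K ((D `\ v) `|` [fset x]) /\ facet n K ((D `\ w) `|` [fset x]).

Definition is_char_partition (n : nat) K (D : {fset V}) (P : {fset {fset V}}) : Prop :=
  forall B, B \in P <->
    exists2 v, v \in D & forall w, w \in B <-> (w \in D /\ char_rel n K D v w).

Definition is_partition (D : {fset V}) (P : {fset {fset V}}) : Prop :=
  [/\ forall B, B \in P -> B != fset0,
      forall B C, B \in P -> C \in P -> B != C -> B `&` C = fset0 &
      forall v, v \in D <-> exists2 B, B \in P & v \in B].

Definition vert K (v : V) : Prop := K [fset v].

End Complexes.

Definition complex_iso (V1 V2 : choiceType) (K1 : {fset V1} -> Prop)
  (K2 : {fset V2} -> Prop) (f : V1 -> V2) : Prop :=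
  [/\ forall x, vert K1 x -> vert K2 (f x),
      forall x y, vert K1 x -> vert K1 y -> f x = f y -> x = y,
      forall y, vert K2 y -> exists2 x, vert K1 x & f x = y &
      forall F : {fset V1}, (forall x, x \in F -> vert K1 x) ->
        (K1 F <-> K2 [fset f x | x in F])].

Definition Delta (n : nat) : {fset nat} := [fset i | i in iota 1 n.+1].

(* Write v' for the vertex opposite to v across D \ v at a facet D, so that the
   characteristic relation is v' = w'.  If v' <> w', the five facets D, flip D v,
   flip D w, flip (flip D v) w and flip (flip D w) v all contain D \ {v, w}, which
   lies in at most four facets; hence the square (D \ {v, w}) + {v', w'} is a facet.
   So after flipping D across D \ u the opposite vertices are u for u' and for every
   w with w' = u', and w' for every other w: exchanging u and u' carries the
   characteristic partition at D to the one at the flipped facet.  Along paths of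
   adjacent facets this gives the invariance of the block sizes and, starting from
   Delta, an isomorphism between two complexes with the same partition, matching the
   vertices opposite to each v.  For existence take the join, over the blocks B of P,
   of the boundaries of the simplices B + a_B: a codimension-2 face lies in three or
   four facets according as its complement meets one B + a_B in three vertices or two
   of them in two vertices each. *)

From mathcomp Require Import all_boot finmap zify.
From Stdlib Require Import ClassicalEpsilon Classical Relations.Relation_Operators.

Set Implicit Arguments.
Unset Strict Implicit.
Unset Printing Implicit Defensive.

Local Open Scope fset_scope.

Section FsetFacts.
Variable T : choiceType.
Implicit Types (A B : {fset T}) (x y : T).

Lemma fsubset_card_eq A B : A `<=` B -> #|` B| <= #|` A| -> A = B.
Proof. by move=> sAB leBA; apply/eqP; rewrite eqEfcard sAB leBA. Qed.

Lemma card_fsetU1_notin A x : x \notin A -> #|` A `|` [fset x]| = (#|` A|).+1.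
Proof. by move=> xA; rewrite fsetUC cardfsU1 xA. Qed.

Lemma card_fsetU2_notin A x y : x \notin A -> y \notin A -> x != y ->
  #|` A `|` [fset x; y]| = (#|` A|).+2.
Proof.
by move=> xA yA xy; rewrite fsetUA !card_fsetU1_notin // !inE negb_or yA eq_sym xy.
Qed.

Lemma card_fsetD1_in A x : x \in A -> #|` A| = (#|` A `\ x|).+1.
Proof. by move=> xA; rewrite (cardfsD1 x) xA. Qed.

Lemma fset_neq_mem A B x : x \in A -> x \notin B -> A != B.
Proof. by move=> xA xB; apply: contraNneq xB => <-. Qed.

Lemma fsetU1_eq A B x : #|` B| = (#|` A|).+1 -> A `<=` B ->
  x \in B -> x \notin A -> B = A `|` [fset x].
Proof.
move=> cB sAB xB xA; symmetry; apply: fsubset_card_eq.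
  by rewrite fsubUset sAB fsub1set xB.
by rewrite card_fsetU1_notin // cB.
Qed.

Lemma fsetU2_eq A B x y : #|` B| = (#|` A|).+2 -> A `<=` B ->
  x \in B -> y \in B -> x \notin A -> y \notin A -> x != y -> B = A `|` [fset x; y].
Proof.
move=> cB sAB xB yB xA yA xy; symmetry; apply: fsubset_card_eq.
  by rewrite fsubUset sAB; apply/fsubsetP => z; rewrite !inE => /orP[]/eqP->.
by rewrite card_fsetU2_notin // cB.
Qed.

Lemma perm_map_card_imfset (F : {fset T} -> {fset T}) (S : {fset {fset T}}) :
  {in S &, injective F} -> (forall C, C \in S -> #|` F C| = #|` C|) ->
  perm_eq [seq #|` C| | C <- S] [seq #|` C| | C <- F @` S].
Proof.
move=> Finj Fcard; have eF : perm_eq (F @` S) [seq F C | C <- S] by apply: enum_imfset.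
rewrite perm_sym (permPl (perm_map (fun C : {fset T} => #|` C|) eF)) -map_comp.
have eC : {in S, (fun C : {fset T} => #|` C|) \o F =1 (fun C : {fset T} => #|` C|)}.
  by move=> C /Fcard.
by move/eq_in_map: eC => ->.
Qed.

End FsetFacts.


Lemma clos_refl_trans_sym (T : Type) (R : T -> T -> Prop) x y :
  (forall a b, R a b -> R b a) -> clos_refl_trans T R x y -> clos_refl_trans T R y x.
Proof.
move=> Rsym; elim=> {x y} [x y /Rsym|x|x y z _ h1 _ h2].
- exact: rt_step.
- exact: rt_refl.
- exact: rt_trans h2 h1.
Qed.

Lemma notin_in_eqF (T : eqType) (D : pred T) a b : a \notin D -> b \in D -> (a == b) = false.
Proof. by move=> aD bD; apply: contraNF aD => /eqP->. Qed.

Ltac case_eqs z := repeat (match goal with |- context [z == ?a] =>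
  let H := fresh "H" in case: (z =P a) => [->|/eqP H]; [|rewrite ?(negbTE H)] end).
Ltac rewrite_bool_hyps := repeat match goal with
 | |- context [?a == ?a] => rewrite eqxx
 | H : is_true (?a != ?b) |- context [?a == ?b] => rewrite (negbTE H)
 | H : is_true (?a != ?b) |- context [?b == ?a] => rewrite [b == a]eq_sym (negbTE H)
 | H : is_true (?a \in ?D) |- context [?a \in ?D] => rewrite H
 | H : is_true (?a \notin ?D) |- context [?a \in ?D] => rewrite (negbTE H)
 | H1 : is_true (?a \notin ?D), H2 : is_true (?b \in ?D) |- context [?a == ?b] =>
     rewrite (notin_in_eqF H1 H2)
 | H1 : is_true (?a \notin ?D), H2 : is_true (?b \in ?D) |- context [?b == ?a] =>
     rewrite [b == a]eq_sym (notin_in_eqF H1 H2)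
 end.
Ltac bool_simpl := rewrite /= ?andbT ?andbF ?orbT ?orbF ?andTb ?andFb ?orTb ?orFb //=.
Ltac mem_solve := rewrite ?inE; rewrite_bool_hyps; bool_simpl.
Ltac fsubset_solve := let z := fresh "z" in
  apply/fsubsetP => z; apply/implyP; rewrite !inE; case_eqs z; rewrite_bool_hyps;
  bool_simpl; try by do ?case: (z \in _).
Ltac fset_solve := let z := fresh "z" in
  apply/fsetP => z; rewrite !inE; case_eqs z; rewrite_bool_hyps;
  bool_simpl; try by do ?case: (z \in _).

Section Type34.
Variable V : choiceType.
Variable n : nat.
Hypothesis n_ge2 : 2 <= n.
Variable K : {fset V} -> Prop.
Hypothesis K34 : type34 n K.
Implicit Types (D F G : {fset V}) (u v w x : V).

Lemma type34_complex : is_complex n K. Proof. by case: K34 => [[]]. Qed.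

Lemma face_subset F G : K F -> G `<=` F -> G != fset0 -> K G.
Proof. by case: type34_complex => _ + _ _ _; apply. Qed.

Lemma size_facets_containing F k (s : seq {fset V}) : nfacets_containing n K F k ->
  uniq s -> (forall G, G \in s -> facet n K G /\ F `<=` G) -> size s <= k.
Proof. by move=> [S [HS <-]] us Hs; apply: uniq_leq_size => // G /Hs /HS. Qed.

Lemma facet_containing_notin F k (s : seq {fset V}) :
  nfacets_containing n K F k -> size s < k ->
  exists G, [/\ facet n K G, F `<=` G & G \notin s].
Proof.
move=> [S [HS cS]] ltsk; have [/allP sSs|/allPn [G GS Gs]] := boolP (all (mem s) S).
  by have := uniq_leq_size (fset_uniq S) sSs; rewrite cS leqNgt ltsk.
by have [fG sFG] := (HS G).1 GS; exists G.
Qed.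

Lemma facetD1 D v : facet n K D -> v \in D -> K (D `\ v) /\ #|` D `\ v| = n.
Proof.
move=> [KD cD] vD; have cDv : #|` D `\ v| = n by move: cD; rewrite (card_fsetD1_in vD) => -[].
split=> //; apply: face_subset KD (fsubsetDl _ _) _.
by rewrite -cardfs_gt0 cDv; apply: leq_trans n_ge2.
Qed.

Lemma facetD2 D v w : facet n K D -> v \in D -> w \in D -> v != w ->
  K (D `\ v `\ w) /\ #|` D `\ v `\ w| = n.-1.
Proof.
move=> fD vD wD vw; have wDv : w \in D `\ v by rewrite !inE eq_sym vw.
have [_ cDv] := facetD1 fD vD; have cF : #|` D `\ v `\ w| = n.-1.
  by rewrite -cDv (card_fsetD1_in wDv).
split=> //; apply: face_subset fD.1 _ _; first by fsubset_solve.
by rewrite -cardfs_gt0 cF -ltnS prednK ?(ltnW n_ge2) //; apply: leq_trans n_ge2.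
Qed.

Lemma facets_containing_ridge_eq D v G1 G2 : facet n K D -> v \in D ->
  facet n K G1 -> facet n K G2 -> D `\ v `<=` G1 -> D `\ v `<=` G2 ->
  G1 != D -> G2 != D -> G1 = G2.
Proof.
move=> fD vD f1 f2 s1 s2 n1 n2; have [KDv cDv] := facetD1 fD vD.
apply/eqP; apply: contraTT isT => n12.
have := size_facets_containing (K34.1.2 _ KDv cDv) (s := [:: D; G1; G2]).
rewrite /= !inE !negb_or ![D == _]eq_sym n1 n2 n12 => /(_ isT).
by apply=> G; rewrite !inE => /orP[/eqP->|/orP[]/eqP->]; split; rewrite ?fsubsetDl.
Qed.

Lemma size_facets_containing_codim2 F (s : seq {fset V}) : K F -> #|` F| = n.-1 ->
  uniq s -> (forall G, G \in s -> facet n K G /\ F `<=` G) -> size s <= 4.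
Proof.
move=> KF cF us Hs; have [h|h] := K34.2 F KF cF.
  by apply: leq_trans (size_facets_containing h us Hs) _.
exact: size_facets_containing h us Hs.
Qed.

(* The vertex v' of the paper; an arbitrary vertex unless D is a facet containing v. *)
Definition opposite D v : V :=
  epsilon (inhabits v) (fun x => x \notin D /\ facet n K (D `\ v `|` [fset x])).

Definition flip D v := D `\ v `|` [fset opposite D v].

Lemma opposite_exists D v : facet n K D -> v \in D ->
  exists x, x \notin D /\ facet n K (D `\ v `|` [fset x]).
Proof.
move=> fD vD; have [KDv cDv] := facetD1 fD vD.
have [G [fG sG GD]] := facet_containing_notin (s := [:: D]) (K34.1.2 _ KDv cDv) isT.
have /fsubsetPn [x xG xDv] : ~~ (G `<=` D `\ v).
  by apply/negP=> /fsubset_leq_card; rewrite cDv fG.2 ltnn.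
have eG : G = D `\ v `|` [fset x] by apply: fsetU1_eq; rewrite ?cDv ?fG.2.
exists x; split; last by rewrite -eG.
apply: contra xDv => xD; rewrite !inE xD andbT; apply: contra GD => /eqP xv.
by rewrite inE eG xv fsetUC fsetD1K.
Qed.

Lemma opposite_spec D v : facet n K D -> v \in D ->
  opposite D v \notin D /\ facet n K (flip D v).
Proof.
move=> fD vD; exact: (epsilon_spec (inhabits v)
  (fun x => x \notin D /\ facet n K (D `\ v `|` [fset x])) (opposite_exists fD vD)).
Qed.

Lemma opposite_notin D v : facet n K D -> v \in D -> opposite D v \notin D.
Proof. by move=> fD vD; case: (opposite_spec fD vD). Qed.

Lemma facet_flip D v : facet n K D -> v \in D -> facet n K (flip D v).
Proof. by move=> fD vD; case: (opposite_spec fD vD). Qed.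

Lemma opposite_unique D v x : facet n K D -> v \in D -> x \notin D ->
  facet n K (D `\ v `|` [fset x]) -> x = opposite D v.
Proof.
move=> fD vD xD fx; have oD := opposite_notin fD vD.
have := facets_containing_ridge_eq fD vD fx (facet_flip fD vD) (fsubsetUl _ _) (fsubsetUl _ _).
rewrite (@fset_neq_mem _ _ _ x) ?(@fset_neq_mem _ _ _ (opposite D v)) ?inE ?eqxx ?orbT //.
move=> /(_ isT isT) E; have : x \in flip D v by rewrite -E !inE eqxx orbT.
by rewrite !inE (negbTE xD) andbF => /eqP.
Qed.

Lemma adjacent_flip D G : adjacent n K D G -> exists2 u, u \in D & G = flip D u.
Proof.
move=> [fD [fG cDG]]; have /fsubsetPn [u uD uG] : ~~ (D `<=` G).
  apply: contraTN isT => /fsetIidPl eD; move: cDG; rewrite eD fD.2 => /eqP.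
  by rewrite -[n.+1]addn1 -{2}[n]addn0 eqn_add2l.
exists u => //; have [_ cDu] := facetD1 fD uD.
have eI : D `&` G = D `\ u.
  apply: fsubset_card_eq; last by rewrite cDu cDG.
  apply/fsubsetP => z; rewrite !inE => /andP[zD zG]; rewrite zD andbT.
  by apply: contraNneq uG => <-.
have sG : D `\ u `<=` G by rewrite -eI fsubsetIr.
have GD : G != D by rewrite eq_sym (fset_neq_mem uD uG).
have [xD fDu] := opposite_spec fD uD.
apply: facets_containing_ridge_eq fD uD fG fDu sG (fsubsetUl _ _) GD _.
by rewrite (@fset_neq_mem _ _ _ (opposite D u)) ?inE ?eqxx ?orbT.
Qed.

Lemma char_relE D v w : facet n K D -> v \in D -> w \in D ->
  char_rel n K D v w <-> opposite D v = opposite D w.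
Proof.
move=> fD vD wD; split=> [[->//|[x [xD [fv fw]]]]|e].
  by rewrite -(opposite_unique fD vD xD fv) -(opposite_unique fD wD xD fw).
right; exists (opposite D v); split; first exact: opposite_notin.
by split; [|rewrite e]; apply: facet_flip.
Qed.

Lemma opposite_flip_notin D v w : facet n K D -> v \in D -> w \in D -> v != w ->
  opposite D v != opposite D w -> opposite (flip D v) w \notin D.
Proof.
move=> fD vD wD vw oo; have [xvD fDv] := opposite_spec fD vD.
have wDv : w \in flip D v by rewrite !inE eq_sym vw wD.
have [yDv _] := opposite_spec fDv wDv.
apply: contra oo => yD; have yv : opposite (flip D v) w = v.
  by apply/eqP; move: yDv; rewrite !inE yD andbT; case: eqP.
have [_ fG] := opposite_spec fDv wDv; rewrite [flip (flip D v) w]/flip yv /flip in fG.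
have eG : (D `\ v `|` [fset opposite D v]) `\ w `|` [fset v] =
          D `\ w `|` [fset opposite D v] by fset_solve.
by rewrite eG in fG; apply/eqP; apply: opposite_unique fG.
Qed.

Lemma facet_square D v w : facet n K D -> v \in D -> w \in D -> v != w ->
  opposite D v != opposite D w ->
  facet n K (D `\ v `\ w `|` [fset opposite D v; opposite D w]).
Proof.
move=> fD vD wD vw oo.
have [xvD fDv] := opposite_spec fD vD; have [xwD fDw] := opposite_spec fD wD.
have wDv : w \in flip D v by rewrite !inE eq_sym vw wD.
have vDw : v \in flip D w by rewrite !inE vw vD.
have [yDv fG1] := opposite_spec fDv wDv; have [zDw fG2] := opposite_spec fDw vDw.
have yD := opposite_flip_notin fD vD wD vw oo.
have zD : opposite (flip D w) v \notin D.
  by apply: opposite_flip_notin; rewrite // eq_sym.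
have [KF cF] := facetD2 fD vD wD vw.
rewrite /flip in fDv fDw wDv vDw yDv zDw fG1 fG2 yD zD.
set xv := opposite D v in xvD fDv wDv yDv fG1 oo yD *.
set xw := opposite D w in xwD fDw vDw zDw fG2 oo zD *.
set Dv := D `\ v `|` [fset xv] in fDv wDv yDv fG1 yD *.
set Dw := D `\ w `|` [fset xw] in fDw vDw zDw fG2 zD *.
set y := opposite Dv w in yDv fG1 yD *; set z := opposite Dw v in zDw fG2 zD *.
set G1 := Dv `\ w `|` [fset y] in fG1 *; set G2 := Dw `\ v `|` [fset z] in fG2 *.
have e12 : G1 = G2.
  apply/eqP; apply: contraTT isT => n12.
  have := size_facets_containing_codim2 (s := [:: D; Dv; Dw; G1; G2]) KF cF.
  apply=> [|G]; last first.
    rewrite !inE => /orP[/eqP->|/orP[/eqP->|/orP[/eqP->|/orP[]/eqP->]]];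
      by split=> //; rewrite /G1 /G2 /Dv /Dw; fsubset_solve.
  rewrite /= !inE !negb_or n12 /G1 /G2 /Dv /Dw /=; repeat (apply/andP; split);
    first [ done | by apply: (@fset_neq_mem _ _ _ v); mem_solve
          | by apply: (@fset_neq_mem _ _ _ w); mem_solve
          | by apply: (@fset_neq_mem _ _ _ xv); mem_solve ].
have yxw : y = xw.
  have : xw \in G1 by rewrite e12 /G2 /Dw; mem_solve.
  by rewrite /G1 /Dv; mem_solve => /eqP.
by move: fG1; rewrite /G1 /Dv yxw; congr (facet n K _); fset_solve.
Qed.

Lemma opposite_flip_opposite D u : facet n K D -> u \in D ->
  opposite (flip D u) (opposite D u) = u.
Proof.
move=> fD uD; have [xD fDu] := opposite_spec fD uD.
symmetry; apply: opposite_unique fDu _ _ _; rewrite /flip; try by mem_solve.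
have -> : (D `\ u `|` [fset opposite D u]) `\ opposite D u `|` [fset u] = D by fset_solve.
exact: fD.
Qed.

Lemma opposite_flip_eq D u v : facet n K D -> u \in D -> v \in D -> v != u ->
  opposite D v = opposite D u -> opposite (flip D u) v = u.
Proof.
move=> fD uD vD vu e; have [xD fDu] := opposite_spec fD uD.
have fDv := facet_flip fD vD; rewrite /flip e in fDv.
symmetry; apply: opposite_unique fDu _ _ _; rewrite /flip; try by mem_solve.
have -> : (D `\ u `|` [fset opposite D u]) `\ v `|` [fset u] =
          D `\ v `|` [fset opposite D u] by fset_solve.
exact: fDv.
Qed.

Lemma opposite_flip_neq D u v : facet n K D -> u \in D -> v \in D -> v != u ->
  opposite D v != opposite D u -> opposite (flip D u) v = opposite D v.
Proof.
move=> fD uD vD vu e; have [xuD fDu] := opposite_spec fD uD.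
have xvD := opposite_notin fD vD.
have uv : u != v by rewrite eq_sym.
have sq := facet_square fD uD vD uv (contra_neq esym e).
symmetry; apply: opposite_unique fDu _ _ _; rewrite /flip; try by mem_solve.
have -> : (D `\ u `|` [fset opposite D u]) `\ v `|` [fset opposite D v] =
          D `\ u `\ v `|` [fset opposite D u; opposite D v] by fset_solve.
exact: sq.
Qed.

Definition opposite_class D v := [fset w in D | opposite D w == opposite D v].
Definition opposite_classes D := [fset opposite_class D v | v in D].

Lemma char_partition_classes D P : facet n K D -> is_char_partition n K D P ->
  P = opposite_classes D.
Proof.
move=> fD HP; apply/fsetP => B; apply/idP/imfsetP => [/HP [v vD Bv]|[v /= vD ->]].
  exists v => //=; apply/fsetP => w; rewrite !inE; apply/idP/andP.
    by move=> /Bv [wD /(char_relE fD vD wD) e]; rewrite wD e.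
  by move=> [wD /eqP e]; apply/Bv; split=> //; apply/(char_relE fD vD wD).
apply/HP; exists v => // w; rewrite !inE; split.
  by move=> /andP[wD /eqP e]; split=> //; apply/(char_relE fD vD wD).
by move=> [wD /(char_relE fD vD wD) ->]; rewrite wD eqxx.
Qed.

Lemma perm_classes_transport D D' (phi psi : V -> V) :
  {in D &, injective phi} -> D' = phi @` D ->
  (forall w1 w2, w1 \in D -> w2 \in D ->
     psi (opposite D w1) = psi (opposite D w2) -> opposite D w1 = opposite D w2) ->
  (forall w, w \in D -> opposite D' (phi w) = psi (opposite D w)) ->
  perm_eq [seq #|` B| | B <- opposite_classes D] [seq #|` B| | B <- opposite_classes D'].
Proof.
move=> phi_inj eD' psi_inj phi_opp.
have class_phi v : v \in D -> opposite_class D' (phi v) = phi @` opposite_class D v.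
  move=> vD; apply/fsetP => x; rewrite !inE; apply/idP/idP.
    move=> /andP[]; rewrite eD' => /imfsetP [w /= wD ->].
    rewrite -eD' !phi_opp // => /eqP /psi_inj e; apply/imfsetP; exists w => //.
    by rewrite !inE wD e // eqxx.
  move=> /imfsetP [w /=]; rewrite !inE => /andP [wD /eqP e] ->.
  by rewrite eD' in_imfset //= -eD' !phi_opp // e eqxx.
have sub C : C \in opposite_classes D -> C `<=` D.
  by move=> /imfsetP [v /= vD ->]; apply/fsubsetP => w; rewrite !inE => /andP[].
have -> : opposite_classes D' = (fun C : {fset V} => phi @` C) @` opposite_classes D.
  apply/fsetP => B; apply/imfsetP/imfsetP => /=.
    case=> v1 + ->; rewrite {1}eD' => /imfsetP [v2 /= v2D ->].
    by exists (opposite_class D v2); [apply/imfsetP; exists v2|rewrite class_phi].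
  case=> C /imfsetP [v2 /= v2D ->] ->.
  by exists (phi v2); [rewrite eD' in_imfset|rewrite class_phi].
apply: perm_map_card_imfset => [C1 C2 h1 h2 e|C hC].
  apply/fsetP => x; wlog xC1 : C1 C2 h1 h2 e / x \in C1.
    move=> W; apply/idP/idP => h; first by rewrite -(W _ _ h1 h2 e h) h.
    by rewrite -(W _ _ h2 h1 (esym e) h) h.
  rewrite xC1; have : phi x \in phi @` C2 by rewrite -e in_imfset.
  case/imfsetP => y /= yC2 exy.
  by rewrite (phi_inj _ _ (fsubsetP (sub _ h1) _ xC1) (fsubsetP (sub _ h2) _ yC2) exy).
rewrite card_in_imfset // => a b ha hb; apply: phi_inj; exact: (fsubsetP (sub _ hC)).
Qed.

Lemma perm_classes_flip D u : facet n K D -> u \in D ->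
  perm_eq [seq #|` B| | B <- opposite_classes D]
          [seq #|` B| | B <- opposite_classes (flip D u)].
Proof.
move=> fD uD; have xD := opposite_notin fD uD; set x := opposite D u in xD *.
pose phi w := if w == u then x else w; pose psi y := if y == x then u else y.
apply: (perm_classes_transport (phi := phi) (psi := psi)).
- move=> w1 w2 h1 h2; rewrite /phi.
  case: (w1 =P u) => [->|_]; case: (w2 =P u) => [->|_] // e.
    by move: h2; rewrite -e (negbTE xD).
  by move: h1; rewrite e (negbTE xD).
- apply/fsetP => z; rewrite /flip !inE; apply/idP/imfsetP => [|[w /= wD ->]].
    case/orP=> [/andP[zu zD]|/eqP ->]; last by exists u; rewrite // /phi eqxx.
    by exists z; rewrite // /phi (negbTE zu).
  rewrite /phi; case: (w =P u) => [_|/eqP wu]; first by rewrite eqxx orbT.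
  by rewrite wu wD.
- move=> w1 w2 h1 h2; have o1 := opposite_notin fD h1; have o2 := opposite_notin fD h2.
  rewrite /psi; case: (opposite D w1 =P x) => [->|_]; case: (opposite D w2 =P x) => [->|_] //.
    by move=> e; move: o2; rewrite -e uD.
  by move=> e; move: o1; rewrite e uD.
- move=> w wD; rewrite /phi /psi; case: (w =P u) => [->|/eqP wu].
    by rewrite opposite_flip_opposite // eqxx.
  case: (opposite D w =P x) => [e|/eqP ne].
    exact: opposite_flip_eq.
  exact: opposite_flip_neq.
Qed.

Lemma perm_char_partitions_card D1 D2 P1 P2 : strongly_connected n K ->
  facet n K D1 -> facet n K D2 ->
  is_char_partition n K D1 P1 -> is_char_partition n K D2 P2 ->
  perm_eq [seq #|` B| | B <- P1] [seq #|` B| | B <- P2].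
Proof.
move=> SC f1 f2 c1 c2.
rewrite (char_partition_classes f1 c1) (char_partition_classes f2 c2).
suff : facet n K D2 /\ perm_eq [seq #|` B| | B <- opposite_classes D1]
                              [seq #|` B| | B <- opposite_classes D2] by case.
have path12 := SC _ _ f1 f2.
elim: path12 f1 => {D1 D2 P1 P2 c1 c2 f2} [D G adj|D|D1 D2 D3 _ IH1 _ IH2] fD.
- have [u uD ->] := adjacent_flip adj.
  by split; [apply: facet_flip | apply: perm_classes_flip].
- by split.
- have [f2 p12] := IH1 fD; have [f3 p23] := IH2 f2.
  by split=> //; apply: perm_trans p12 p23.
Qed.

End Type34.

Section Transport.
Variable V : choiceType.
Variable n : nat.
Hypothesis n_ge2 : 2 <= n.
Variables K1 K2 : {fset V} -> Prop.
Hypothesis K1_34 : type34 n K1.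
Hypothesis K2_34 : type34 n K2.
Variable D : {fset V}.
Hypothesis fD1 : facet n K1 D.
Hypothesis fD2 : facet n K2 D.
Variable f : V -> V.
Hypothesis f_id : {in D, f =1 id}.
Hypothesis f_opposite : forall v, v \in D -> f (opposite n K1 D v) = opposite n K2 D v.

Definition near_base y := y \in D \/ exists2 v, v \in D & y = opposite n K1 D v.

Hypothesis f_inj : forall a b, near_base a -> near_base b -> f a = f b -> a = b.

Definition transported G :=
  [/\ facet n K1 G, facet n K2 (f @` G), {in G, forall y, near_base y} &
      forall v, v \in G -> near_base (opposite n K1 G v) /\
                         f (opposite n K1 G v) = opposite n K2 (f @` G) (f v)].

Lemma transported_base : transported D.
Proof.
rewrite /transported; have -> : f @` D = D.
  apply/fsetP => z; apply/imfsetP/idP => [[w /= wD ->]|zD]; first by rewrite f_id.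
  by exists z; rewrite ?f_id.
split=> // [y yD|v vD]; [by left | split; [by right; exists v | by rewrite f_opposite ?f_id]].
Qed.

Lemma transported_flip G u : transported G -> u \in G -> transported (flip n K1 G u).
Proof.
move=> [f1 f2 G_near G_opp] uG; have xG := opposite_notin n_ge2 K1_34 f1 uG.
set x := opposite n K1 G u in xG *.
have [x_near fx] := G_opp _ uG; rewrite -/x in x_near fx.
set H := f @` G in f2 fx G_opp *.
have fuH : f u \in H by rewrite in_imfset.
have u_near := G_near _ uG.
have f_neq w : w \in G -> w != u -> f w != f u.
  by move=> wG; apply: contraNneq => /(f_inj (G_near _ wG) u_near) ->.
have eH : f @` flip n K1 G u = flip n K2 H (f u).
  rewrite /flip -/x -fx; apply/fsetP => z; rewrite !inE; apply/imfsetP/idP.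
    case=> w /=; rewrite !inE => /orP[/andP[wu wG] ->|/eqP -> ->]; last by rewrite eqxx orbT.
    by rewrite /H in_imfset // f_neq.
  case/orP => [/andP[zfu /imfsetP [w /= wG ezw]]|/eqP ->]; last first.
    by exists x; rewrite ?inE ?eqxx ?orbT.
  exists w => //; rewrite !inE wG andbT; apply/orP; left.
  by apply: contraNneq zfu => wu; rewrite ezw wu.
split.
- exact: facet_flip.
- by rewrite eH; apply: facet_flip.
- by move=> y; rewrite !inE => /orP[/andP[_ /G_near]|/eqP ->].
move=> v; rewrite {1}/flip !inE => /orP[/andP[vu vG]|/eqP ->]; last first.
  rewrite opposite_flip_opposite //; split=> //.
  by rewrite eH fx opposite_flip_opposite.
have [v_near fv] := G_opp _ vG; have fvH : f v \in H by rewrite in_imfset.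
have fvu := f_neq _ vG vu; rewrite eH.
have [e|/eqP ne] := opposite n K1 G v =P x.
  rewrite opposite_flip_eq //; split=> //.
  by rewrite opposite_flip_eq // -fv -fx e.
rewrite opposite_flip_neq //; split=> //.
rewrite opposite_flip_neq // -fv -fx.
exact: contra_neq (f_inj v_near x_near) ne.
Qed.

Lemma transported_facets : strongly_connected n K1 ->
  forall G, facet n K1 G -> transported G.
Proof.
move=> SC G fG; have path := SC _ _ fD1 fG.
elim: path transported_base => {G fG} [G G' adj|G|G1 G2 G3 _ IH1 _ IH2] tG //.
- by have [u uG ->] := adjacent_flip n_ge2 K1_34 adj; apply: transported_flip.
- exact: IH2 (IH1 tG).
Qed.

Lemma face_transport : strongly_connected n K1 -> forall F, K1 F -> K2 (f @` F).
Proof.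
move=> SC F KF; have [F_ne _ _ _ ext] := type34_complex K1_34.
have [G KG /andP[sFG /eqP cG]] := ext F KF.
have [_ fG _ _] := transported_facets SC (conj KG cG).
apply: (face_subset K2_34 fG.1).
  by apply/fsubsetP => z /imfsetP [w /= wF ->]; rewrite in_imfset // (fsubsetP sFG).
have /fset0Pn [w wF] := F_ne _ KF.
by apply/fset0Pn; exists (f w); rewrite in_imfset.
Qed.

Lemma vert_near_base : strongly_connected n K1 -> forall x, vert K1 x -> near_base x.
Proof.
move=> SC x Kx; have [_ _ _ _ ext] := type34_complex K1_34.
have [G KG /andP[sxG /eqP cG]] := ext _ Kx.
have [_ _ G_near _] := transported_facets SC (conj KG cG).
by apply: G_near; apply: (fsubsetP sxG); rewrite inE.
Qed.

End Transport.

Section Relabel.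
Variable V : choiceType.
Variable D : {fset V}.
Variables X Y : V -> V.
Hypothesis X_notin : forall v, v \in D -> X v \notin D.
Hypothesis XY_compat : forall v w, v \in D -> w \in D -> X v = X w -> Y v = Y w.

(* Fixes D and sends X v to Y v, consistently by [XY_compat]. *)
Definition relabel y : V :=
  if y \in D then y else if [seq v <- D | X v == y] is v :: _ then Y v else y.

Lemma relabel_id : {in D, relabel =1 id}.
Proof. by move=> v vD; rewrite /relabel vD. Qed.

Lemma relabel_X v : v \in D -> relabel (X v) = Y v.
Proof.
move=> vD; rewrite /relabel (negbTE (X_notin vD)).
have : v \in [seq w <- D | X w == X v] by rewrite mem_filter eqxx vD.
case E : [seq w <- D | X w == X v] => [//|w s] _.
have : w \in [seq w <- D | X w == X v] by rewrite E inE eqxx.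
by rewrite mem_filter => /andP[/eqP e wD]; apply: XY_compat.
Qed.

End Relabel.

Lemma opposite_classes_opposite_eq (V : choiceType) n (K1 K2 : {fset V} -> Prop) D :
  opposite_classes n K1 D = opposite_classes n K2 D -> forall v w, v \in D -> w \in D ->
  opposite n K1 D v = opposite n K1 D w -> opposite n K2 D v = opposite n K2 D w.
Proof.
move=> E v w vD wD e.
have : opposite_class n K1 D v \in opposite_classes n K1 D by rewrite in_imfset.
rewrite E => /imfsetP [v' /= v'D e'].
have : v \in opposite_class n K1 D v by rewrite !inE vD eqxx.
have : w \in opposite_class n K1 D v by rewrite !inE wD e eqxx.
by rewrite e' !inE => /andP[_ /eqP ->] /andP[_ /eqP ->].
Qed.

Lemma char_partition_iso (V : choiceType) n (D : {fset V}) P (K1 K2 : {fset V} -> Prop) :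
  2 <= n ->
  scc34 n K1 -> facet n K1 D -> is_char_partition n K1 D P ->
  scc34 n K2 -> facet n K2 D -> is_char_partition n K2 D P ->
  exists f : V -> V, complex_iso K1 K2 f /\ (forall i, i \in D -> f i = i).
Proof.
move=> n_ge2 [K1_34 SC1] fD1 c1 [K2_34 SC2] fD2 c2.
have E12 : opposite_classes n K1 D = opposite_classes n K2 D.
  by rewrite -(char_partition_classes n_ge2 K1_34 fD1 c1)
             -(char_partition_classes n_ge2 K2_34 fD2 c2).
set X1 := opposite n K1 D; set X2 := opposite n K2 D.
have X1_notin v : v \in D -> X1 v \notin D by apply: opposite_notin.
have X2_notin v : v \in D -> X2 v \notin D by apply: opposite_notin.
pose f := relabel D X1 X2; pose g := relabel D X2 X1.
have f_id : {in D, f =1 id} by apply: relabel_id.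
have g_id : {in D, g =1 id} by apply: relabel_id.
have f_X v : v \in D -> f (X1 v) = X2 v.
  by apply: relabel_X => //; apply: opposite_classes_opposite_eq.
have g_X v : v \in D -> g (X2 v) = X1 v.
  by apply: relabel_X => //; apply: opposite_classes_opposite_eq.
have gK a : near_base n K1 D a -> g (f a) = a.
  by case=> [aD|[v vD ->]]; [rewrite f_id // g_id | rewrite f_X // g_X].
have fK a : near_base n K2 D a -> f (g a) = a.
  by case=> [aD|[v vD ->]]; [rewrite g_id // f_id | rewrite g_X // f_X].
have f_inj a b : near_base n K1 D a -> near_base n K1 D b -> f a = f b -> a = b.
  by move=> na nb e; rewrite -(gK _ na) -(gK _ nb) e.
have g_inj a b : near_base n K2 D a -> near_base n K2 D b -> g a = g b -> a = b.
  by move=> na nb e; rewrite -(fK _ na) -(fK _ nb) e.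
have f_face := face_transport n_ge2 K1_34 K2_34 fD1 fD2 f_id f_X f_inj SC1.
have g_face := face_transport n_ge2 K2_34 K1_34 fD2 fD1 g_id g_X g_inj SC2.
have near1 := vert_near_base n_ge2 K1_34 K2_34 fD1 fD2 f_id f_X f_inj SC1.
have near2 := vert_near_base n_ge2 K2_34 K1_34 fD2 fD1 g_id g_X g_inj SC2.
exists f; split=> //; split.
- by move=> x /f_face; rewrite /vert imfset_fset1.
- by move=> x y /near1 nx /near1 ny; apply: f_inj.
- move=> y vy; exists (g y); last exact/fK/near2.
  by move: vy => /g_face; rewrite /vert imfset_fset1.
- move=> F F_vert; split; first exact: f_face.
  move=> /g_face; congr K1; apply/fsetP => z; apply/imfsetP/idP.
    by case=> w /= /imfsetP [x /= xF ->] ->; rewrite gK //; apply/near1/F_vert.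
  by move=> zF; exists (f z); rewrite ?in_imfset ?gK //; apply/near1/F_vert.
Qed.

Lemma mem_Delta n i : (i \in Delta n) = (0 < i <= n.+1).
Proof. by rewrite /Delta !inE mem_iota; case: i => [|[|i]]. Qed.

Lemma card_Delta n : #|` Delta n| = n.+1.
Proof. by rewrite card_fseq undup_id ?iota_uniq ?size_iota. Qed.

Lemma nfacets_containing_seq (V : choiceType) n (K : {fset V} -> Prop) F
    (s : seq {fset V}) :
  uniq s -> (forall G, G \in s <-> facet n K G /\ F `<=` G) ->
  nfacets_containing n K F (size s).
Proof.
move=> us hs; exists [fset G in s]; split; first by move=> G; rewrite in_fset; apply: hs.
by rewrite card_fseq undup_id.
Qed.

(* The apex a_B of the block B is n + 2 + (index of B in P); a set of vertices is
   a face iff its complement meets every B + a_B. *)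
Section JoinComplex.
Variable n : nat.
Hypothesis n_ge2 : 2 <= n.
Variable P : {fset {fset nat}}.
Hypothesis P_partition : is_partition (Delta n) P.

Local Notation Delta := (Delta n).
Implicit Types (F G S T : {fset nat}) (a b v w y : nat).

Definition block_index v := find (fun B : {fset nat} => v \in B) P.
Definition apex v := (n.+2 + block_index v)%N.
Definition apex_of y := if y \in Delta then apex y else y.
Definition apexes := apex @` Delta.
Definition join_vertices := Delta `|` apexes.
Definition meets_all_blocks S := apexes `<=` apex_of @` S.
Definition join_complex F :=
  [/\ F != fset0, F `<=` join_vertices & meets_all_blocks (join_vertices `\` F)].

Lemma apex_notin_Delta v : apex v \notin Delta.
Proof. by rewrite mem_Delta /apex; apply/negP => /andP[_]; lia. Qed.

Lemma apexes_notin_Delta a : a \in apexes -> a \notin Delta.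
Proof. by case/imfsetP => v /= _ ->; apply: apex_notin_Delta. Qed.

Lemma apex_of_apex a : a \in apexes -> apex_of a = a.
Proof. by move=> aA; rewrite /apex_of (negbTE (apexes_notin_Delta aA)). Qed.

Lemma apex_of_in y : y \in join_vertices -> apex_of y \in apexes.
Proof.
rewrite inE => /orP[yD|yA]; last by rewrite apex_of_apex.
by rewrite /apex_of yD in_imfset.
Qed.

Lemma Delta_sub_join : Delta `<=` join_vertices. Proof. exact: fsubsetUl. Qed.
Lemma apexes_sub_join : apexes `<=` join_vertices. Proof. exact: fsubsetUr. Qed.

Lemma card_join_vertices : #|` join_vertices| = (n.+1 + #|` apexes|)%N.
Proof.
rewrite /join_vertices cardfsU card_Delta; have -> : Delta `&` apexes = fset0.
  apply/fsetP => z; rewrite in_fsetI in_fset0.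
  by apply/negP => /andP[zD /apexes_notin_Delta]; rewrite zD.
by rewrite cardfs0 subn0.
Qed.

Lemma card_join_complement F : F `<=` join_vertices ->
  #|` join_vertices `\` F| = (n.+1 + #|` apexes| - #|` F|)%N.
Proof. by move=> sF; rewrite cardfsDS // card_join_vertices. Qed.

Lemma meets_all_blocks_card S : meets_all_blocks S -> #|` apexes| <= #|` S|.
Proof. by move=> h; apply: leq_trans (fsubset_leq_card h) (leq_imfset_card _ _ _). Qed.

Lemma meets_all_blocksD1 S y y' : meets_all_blocks S -> y \in S -> y' \in S -> y != y' ->
  apex_of y = apex_of y' -> meets_all_blocks (S `\ y).
Proof.
move=> h yS y'S yy e; apply/fsubsetP => a /(fsubsetP h) /imfsetP [z /= zS ->].
case: (z =P y) => [->|/eqP zy]; first by rewrite e in_imfset // !inE eq_sym yy.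
by rewrite in_imfset // !inE zy.
Qed.

Lemma meets_all_blocks_collision S : S `<=` join_vertices -> #|` apexes| < #|` S| ->
  exists y y', [/\ y \in S, y' \in S, y != y' & apex_of y = apex_of y'].
Proof.
move=> sS ltAS; apply: NNPP => no_coll.
have inj : {in S &, injective apex_of}.
  move=> a b aS bS e; apply: NNPP => ab; apply: no_coll; exists a, b; split=> //.
  exact/eqP.
have : apex_of @` S `<=` apexes.
  by apply/fsubsetP => z /imfsetP [y /= /(fsubsetP sS) yW ->]; apply: apex_of_in.
by move/fsubset_leq_card; rewrite card_in_imfset // leqNgt ltAS.
Qed.

Lemma join_complex_card F : join_complex F -> #|` F| <= n.+1.
Proof.
move=> [_ sF /meets_all_blocks_card]; rewrite card_join_complement //.
by have := fsubset_leq_card sF; rewrite card_join_vertices; lia.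
Qed.

Lemma join_complexU F T : join_complex F -> T `<=` join_vertices `\` F ->
  (forall t, t \in T -> exists2 s, s \in (join_vertices `\` F) `\` T & apex_of s = apex_of t) ->
  join_complex (F `|` T).
Proof.
move=> [F_ne sF hF] sT hT; split.
- by case/fset0Pn: F_ne => z zF; apply/fset0Pn; exists z; rewrite in_fsetU zF.
- by rewrite fsubUset sF; apply: fsubset_trans sT (fsubsetDl _ _).
rewrite /meets_all_blocks -fsetDDl; apply/fsubsetP => a /(fsubsetP hF) /imfsetP [z /= zS ->].
have [zT|zT] := boolP (z \in T); first by have [s sS <-] := hT _ zT; rewrite in_imfset.
by rewrite in_imfset // inE zT zS.
Qed.

Lemma join_complexU1 F y y' : join_complex F -> y \in join_vertices `\` F ->
  y' \in join_vertices `\` F -> y != y' -> apex_of y = apex_of y' ->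
  join_complex (F `|` [fset y]).
Proof.
move=> hF yS y'S yy e; apply: join_complexU; rewrite ?fsub1set //.
by move=> t; rewrite inE => /eqP ->; exists y'; rewrite // in_fsetD1 eq_sym yy.
Qed.

Lemma join_complexU2 F x w s1 s2 : join_complex F -> x \in join_vertices `\` F ->
  w \in join_vertices `\` F -> s1 \in join_vertices `\` F -> s2 \in join_vertices `\` F ->
  s1 \notin [fset x; w] -> s2 \notin [fset x; w] ->
  apex_of s1 = apex_of x -> apex_of s2 = apex_of w -> join_complex (F `|` [fset x; w]).
Proof.
move=> hF xS wS s1S s2S s1n s2n e1 e2; apply: join_complexU => //.
  by apply/fsubsetP => z; rewrite in_fset2 => /orP[]/eqP->.
move=> t; rewrite in_fset2 => /orP[]/eqP->.
  by exists s1; rewrite // in_fsetD s1n s1S.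
by exists s2; rewrite // in_fsetD s2n s2S.
Qed.

Lemma facet_complement_apex_inj G y y' : facet n join_complex G ->
  y \in join_vertices `\` G -> y' \in join_vertices `\` G -> apex_of y = apex_of y' -> y = y'.
Proof.
move=> [[_ sG hG] cG] yS y'S e; apply/eqP; apply: contraTT isT => yy.
have := meets_all_blocks_card (meets_all_blocksD1 hG yS y'S yy e).
by rewrite -ltnS -(card_fsetD1_in yS) card_join_complement // cG; lia.
Qed.

Lemma join_complex_extend F : join_complex F ->
  exists G, [/\ join_complex G, F `<=` G & #|` G| = n.+1].
Proof.
move=> hF; move: {2}(n.+1 - #|` F|)%N (erefl (n.+1 - #|` F|)%N) => k.
elim: k F hF => [|k IH] F hF hk.
  exists F; split=> //; apply/eqP; rewrite eqn_leq join_complex_card //=.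
  by move: hk => /eqP; rewrite subn_eq0.
have [_ sF _] := hF.
have [|y [y' [yS y'S yy e]]] := meets_all_blocks_collision (fsubsetDl join_vertices F).
  by rewrite card_join_complement //; move: hk; lia.
have yF : y \notin F by move: yS; rewrite in_fsetD => /andP[].
have [|G [hG sG cG]] := IH _ (join_complexU1 hF yS y'S yy e).
  by rewrite card_fsetU1_notin //; move: hk; lia.
by exists G; split=> //; apply: fsubset_trans sG; apply: fsubsetUl.
Qed.

Lemma join_complex_is_complex : is_complex n join_complex.
Proof.
have sub F G : join_complex F -> G `<=` F -> G != fset0 -> join_complex G.
  move=> [_ sF hF] sGF G_ne; split=> //; first exact: fsubset_trans sGF sF.
  apply: fsubset_trans hF _; apply/fsubsetP => z /imfsetP [y /= yS ->].
  by rewrite in_imfset // (fsubsetP (fsetDS _ sGF)).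
split.
- by move=> F [].
- exact: sub.
- by move=> F G hF _; apply: sub hF (fsubsetIl _ _).
- exact: join_complex_card.
- move=> F /join_complex_extend [G [hG sG cG]].
  by exists G => //; rewrite sG cG eqxx.
Qed.

Lemma facet_meets_collision F G x w : facet n join_complex G -> F `<=` G ->
  x \in join_vertices `\` F -> w \in join_vertices `\` F -> x != w ->
  apex_of x = apex_of w -> x \in G \/ w \in G.
Proof.
move=> fG sFG xS wS xw e; have [xG|xG] := boolP (x \in G); [by left|right].
apply: contraTT isT => wG; have [[_ sG _] _] := fG.
have xW : x \in join_vertices by move: xS; rewrite in_fsetD => /andP[].
have wW : w \in join_vertices by move: wS; rewrite in_fsetD => /andP[].
have := facet_complement_apex_inj fG (y := x) (y' := w).
by rewrite !in_fsetD xG wG xW wW => /(_ isT isT e) /eqP; rewrite (negbTE xw).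
Qed.

Lemma join_complex_closed F : join_complex F -> #|` F| = n ->
  nfacets_containing n join_complex F 2.
Proof.
move=> hF cF; have [_ sF hs] := hF.
have [|y [y' [yS y'S yy e]]] := meets_all_blocks_collision (fsubsetDl join_vertices F).
  by rewrite card_join_complement // cF; lia.
have yF : y \notin F by move: yS; rewrite inE => /andP[].
have y'F : y' \notin F by move: y'S; rewrite inE => /andP[].
have f1 : facet n join_complex (F `|` [fset y]).
  by split; [apply: join_complexU1 yS y'S yy e | rewrite card_fsetU1_notin // cF].
have f2 : facet n join_complex (F `|` [fset y']).
  have y'y : y' != y by rewrite eq_sym.
  by split; [apply: join_complexU1 y'S yS y'y (esym e) | rewrite card_fsetU1_notin // cF].
apply: (@nfacets_containing_seq _ _ _ _ [:: F `|` [fset y]; F `|` [fset y']]).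
  by rewrite /= inE andbT; apply: (@fset_neq_mem _ _ _ y); mem_solve.
move=> G; split=> [|[fG sFG]].
  by rewrite !inE => /orP[]/eqP->; split; rewrite ?fsubsetUl.
have [yG|y'G] := facet_meets_collision fG sFG yS y'S yy e; rewrite !inE.
  by rewrite (fsetU1_eq (x := y) _ sFG) ?fG.2 ?cF ?eqxx.
by rewrite (fsetU1_eq (x := y') _ sFG) ?fG.2 ?cF ?eqxx ?orbT.
Qed.

Section Codim2.
Variable F : {fset nat}.
Hypothesis hF : join_complex F.
Hypothesis cF : #|` F| = n.-1.
Local Notation S := (join_vertices `\` F).

Lemma notin_codim2 x : x \in S -> x \notin F.
Proof. by rewrite inE => /andP[]. Qed.

Lemma facet_codim2U2 x w s1 s2 : x \in S -> w \in S -> x != w -> s1 \in S -> s2 \in S ->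
  s1 \notin [fset x; w] -> s2 \notin [fset x; w] ->
  apex_of s1 = apex_of x -> apex_of s2 = apex_of w ->
  facet n join_complex (F `|` [fset x; w]) /\ F `<=` F `|` [fset x; w].
Proof.
move=> xS wS xw s1S s2S s1n s2n e1 e2; split; last exact: fsubsetUl.
split; first exact: join_complexU2 s1S s2S s1n s2n e1 e2.
by rewrite card_fsetU2_notin ?notin_codim2 // cF; move: n_ge2; lia.
Qed.

Lemma facet_codim2_eq G x w : facet n join_complex G -> F `<=` G ->
  x \in G -> w \in G -> x \in S -> w \in S -> x != w -> G = F `|` [fset x; w].
Proof.
move=> [_ cG] sFG xG wG xS wS xw.
by apply: fsetU2_eq; rewrite ?notin_codim2 // cG cF; move: n_ge2; lia.
Qed.


Lemma nfacets_codim2_triple a b c : a \in S -> b \in S -> c \in S ->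
  a != b -> a != c -> b != c -> apex_of a = apex_of b -> apex_of b = apex_of c ->
  nfacets_containing n join_complex F 3.
Proof.
move=> aS bS cS ab ac bc eab ebc.
have aF := notin_codim2 aS; have bF := notin_codim2 bS; have cF' := notin_codim2 cS.
apply: (@nfacets_containing_seq _ _ _ _
  [:: F `|` [fset a; b]; F `|` [fset a; c]; F `|` [fset b; c]]).
  rewrite /= !inE !negb_or !andbT; apply/andP; split; [apply/andP; split|].
  + by apply: (@fset_neq_mem _ _ _ b); mem_solve.
  + by apply: (@fset_neq_mem _ _ _ a); mem_solve.
  + by apply: (@fset_neq_mem _ _ _ a); mem_solve.
move=> G; split.
  rewrite !inE => /orP[/eqP->|/orP[/eqP->|/eqP->]].
  + by apply: (facet_codim2U2 aS bS ab cS cS); rewrite ?in_fset2; mem_solve; congruence.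
  + by apply: (facet_codim2U2 aS cS ac bS bS); rewrite ?in_fset2; mem_solve; congruence.
  + by apply: (facet_codim2U2 bS cS bc aS aS); rewrite ?in_fset2; mem_solve; congruence.
move=> [fG sFG]; rewrite !inE.
have eq2 := facet_codim2_eq fG sFG.
have [aG|bG] := facet_meets_collision fG sFG aS bS ab eab.
  have [bG|cG] := facet_meets_collision fG sFG bS cS bc ebc.
    by rewrite (eq2 a b) ?eqxx.
  by rewrite (eq2 a c) ?eqxx ?orbT.
have [aG|cG] := facet_meets_collision fG sFG aS cS ac (etrans eab ebc).
  by rewrite (eq2 a b) ?eqxx.
by rewrite (eq2 b c) ?eqxx ?orbT.
Qed.

Lemma nfacets_codim2_pairs a a' b b' : a \in S -> a' \in S -> b \in S -> b' \in S ->
  a != a' -> b != b' -> apex_of a = apex_of a' -> apex_of b = apex_of b' ->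
  apex_of a != apex_of b -> nfacets_containing n join_complex F 4.
Proof.
move=> aS a'S bS b'S aa' bb' ea eb eab.
have aF := notin_codim2 aS; have a'F := notin_codim2 a'S.
have bF := notin_codim2 bS; have b'F := notin_codim2 b'S.
have ab : a != b by apply: contraNneq eab => ->.
have ab' : a != b' by apply: contraNneq eab => ->; rewrite eb.
have a'b : a' != b by apply: contraNneq eab => e; rewrite ea e.
have a'b' : a' != b' by apply: contraNneq eab => e; rewrite ea eb e.
apply: (@nfacets_containing_seq _ _ _ _
  [:: F `|` [fset a; b]; F `|` [fset a; b']; F `|` [fset a'; b]; F `|` [fset a'; b']]).
  rewrite /= !inE !negb_or !andbT; repeat (apply/andP; split);
    first [ by apply: (@fset_neq_mem _ _ _ a); mem_solve
          | by apply: (@fset_neq_mem _ _ _ b); mem_solve ].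
move=> G; split.
  rewrite !inE => /orP[/eqP->|/orP[/eqP->|/orP[/eqP->|/eqP->]]].
  + by apply: (facet_codim2U2 aS bS ab a'S b'S); rewrite ?in_fset2; mem_solve.
  + by apply: (facet_codim2U2 aS b'S ab' a'S bS); rewrite ?in_fset2; mem_solve.
  + by apply: (facet_codim2U2 a'S bS a'b aS b'S); rewrite ?in_fset2; mem_solve.
  + by apply: (facet_codim2U2 a'S b'S a'b' aS bS); rewrite ?in_fset2; mem_solve.
move=> [fG sFG]; rewrite !inE.
have eq2 := facet_codim2_eq fG sFG.
have [aG|a'G] := facet_meets_collision fG sFG aS a'S aa' ea;
have [bG|b'G] := facet_meets_collision fG sFG bS b'S bb' eb.
+ by rewrite (eq2 a b) ?eqxx.
+ by rewrite (eq2 a b') ?eqxx ?orbT.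
+ by rewrite (eq2 a' b) ?eqxx ?orbT.
+ by rewrite (eq2 a' b') ?eqxx ?orbT.
Qed.

End Codim2.

Lemma join_complex_type F : join_complex F -> #|` F| = n.-1 ->
  nfacets_containing n join_complex F 3 \/ nfacets_containing n join_complex F 4.
Proof.
move=> hF cF; have [_ sF hs] := hF.
have cS : #|` join_vertices `\` F| = (#|` apexes|).+2.
  by rewrite card_join_complement // cF; move: n_ge2; lia.
have [|a [a' [aS a'S aa' ea]]] := meets_all_blocks_collision (fsubsetDl join_vertices F).
  by rewrite cS.
have [||b [b' [bS1 b'S1 bb' eb]]] := @meets_all_blocks_collision (join_vertices `\` F `\ a).
- by apply: fsubset_trans (fsubsetDl _ _) (fsubsetDl _ _).
- by move: cS; rewrite (card_fsetD1_in aS) => -[->].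
have [ba bS] : b != a /\ b \in join_vertices `\` F by move: bS1; rewrite in_fsetD1 => /andP.
have [b'a b'S] : b' != a /\ b' \in join_vertices `\` F by move: b'S1; rewrite in_fsetD1 => /andP.
have [e|ne] := eqVneq (apex_of a) (apex_of b).
  by left; apply: (nfacets_codim2_triple hF cF aS bS b'S); rewrite // eq_sym.
by right; apply: (nfacets_codim2_pairs hF cF aS a'S bS b'S).
Qed.

Lemma join_complex_type34 : type34 n join_complex.
Proof.
split; last exact: join_complex_type.
by split; [exact: join_complex_is_complex | exact: join_complex_closed].
Qed.


Lemma facet_join_Delta : facet n join_complex Delta.
Proof.
split; last exact: card_Delta.
split; [by rewrite -cardfs_gt0 card_Delta | exact: Delta_sub_join |].
apply/fsubsetP => a aA; apply/imfsetP; exists a; rewrite ?apex_of_apex //.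
by rewrite in_fsetD (apexes_notin_Delta aA) (fsubsetP apexes_sub_join).
Qed.

Lemma opposite_join_Delta v : v \in Delta -> opposite n join_complex Delta v = apex v.
Proof.
move=> vD; symmetry.
apply: (opposite_unique n_ge2 join_complex_type34 facet_join_Delta vD (apex_notin_Delta v)).
have aA : apex v \in apexes by rewrite in_imfset.
have av : apex v != v by apply: contraNneq (apex_notin_Delta v) => ->.
split; last first.
  by rewrite card_fsetU1_notin ?in_fsetD1 ?(negbTE (apex_notin_Delta v)) ?andbF //
             -(card_fsetD1_in vD) card_Delta.
split.
- by apply/fset0Pn; exists (apex v); rewrite in_fsetU in_fset1 eqxx orbT.
- rewrite fsubUset fsub1set (fsubsetP apexes_sub_join) // andbT.
  exact: fsubset_trans (fsubsetDl _ _) Delta_sub_join.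
apply/fsubsetP => a aA'; apply/imfsetP; have [->|aa] := eqVneq a (apex v).
  exists v; last by rewrite /apex_of vD.
  by rewrite in_fsetD in_fsetU in_fset1 in_fsetD1 eqxx (fsubsetP Delta_sub_join) // eq_sym av.
exists a; last by rewrite apex_of_apex.
rewrite in_fsetD in_fsetU in_fset1 in_fsetD1 (negbTE (apexes_notin_Delta aA')) (negbTE aa).
by rewrite andbF (fsubsetP apexes_sub_join).
Qed.

(* Exchanging an apex of G for a vertex of Delta in the same block reduces
   |G \ Delta| while keeping G a facet. *)
Lemma facet_join_connected_Delta G : facet n join_complex G ->
  clos_refl_trans {fset nat} (adjacent n join_complex) G Delta.
Proof.
move: {2}#|` G `\` Delta| (erefl #|` G `\` Delta|) => k.
elim: k G => [|k IH] G cG fG.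
  have sGD : G `<=` Delta.
    apply/fsubsetP => z zG; apply: contraT => zD.
    by move/cardfs0_eq: cG => /fsetP /(_ z); rewrite in_fsetD zD zG in_fset0.
  by rewrite (fsubset_card_eq sGD) ?card_Delta ?fG.2 //; apply: rt_refl.
have /fset0Pn [a] : G `\` Delta != fset0 by rewrite -cardfs_gt0 cG.
rewrite in_fsetD => /andP[aD aG]; have [[_ sG hG] cG'] := fG.
have aA : a \in apexes by move: (fsubsetP sG _ aG); rewrite in_fsetU (negbTE aD).
case/imfsetP: (fsubsetP hG _ aA) => u /=; rewrite in_fsetD => /andP[uG uW] eu.
have ua : u != a by apply: contraNneq uG => ->.
have uD : u \in Delta.
  by apply: contraT => uD; move: eu; rewrite /apex_of (negbTE uD) => eu; rewrite eu eqxx in ua.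
pose G' := G `\ a `|` [fset u].
have uGa : u \notin G `\ a by rewrite in_fsetD1 (negbTE uG) andbF.
have fG' : facet n join_complex G'.
  split; last by rewrite card_fsetU1_notin // -(card_fsetD1_in aG) cG'.
  split.
  - by apply/fset0Pn; exists u; rewrite in_fsetU in_fset1 eqxx orbT.
  - rewrite fsubUset fsub1set (fsubsetP Delta_sub_join) // andbT.
    exact: fsubset_trans (fsubsetDl _ _) sG.
  apply/fsubsetP => b /(fsubsetP hG) /imfsetP [z /=]; rewrite in_fsetD => /andP[zG zW] ->.
  have [->|zu] := eqVneq z u.
    apply/imfsetP; exists a; last by rewrite -eu apex_of_apex.
    rewrite in_fsetD in_fsetU in_fsetD1 in_fset1 eqxx eq_sym (negbTE ua).
    by rewrite (fsubsetP apexes_sub_join).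
  apply/imfsetP; exists z => //.
  by rewrite in_fsetD in_fsetU in_fsetD1 in_fset1 (negbTE zG) (negbTE zu) andbF zW.
have adj : adjacent n join_complex G G'.
  split=> //; split=> //; have -> : G `&` G' = G `\ a by rewrite /G'; fset_solve.
  by move: cG'; rewrite (card_fsetD1_in aG) => -[].
apply: rt_trans (rt_step _ _ _ _ adj) (IH _ _ fG').
have -> : G' `\` Delta = (G `\` Delta) `\ a.
  apply/fsetP => z; rewrite in_fsetD1 !in_fsetD in_fsetU in_fset1 in_fsetD1.
  have [->|_] := eqVneq z u; first by rewrite uD andbF.
  by rewrite orbF; case: (z \in Delta); case: (z == a); case: (z \in G).
by move: cG; rewrite (@card_fsetD1_in _ (G `\` Delta) a) ?in_fsetD ?aD ?aG // => -[].
Qed.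

Lemma join_complex_strongly_connected : strongly_connected n join_complex.
Proof.
move=> G H fG fH; apply: rt_trans (facet_join_connected_Delta fG) _.
apply: clos_refl_trans_sym (facet_join_connected_Delta fH).
by move=> A B [fA [fB cAB]]; split=> //; split=> //; rewrite fsetIC.
Qed.

Definition block v := nth fset0 P (block_index v).

Lemma block_index_spec v : v \in Delta -> block_index v < size P /\ v \in block v.
Proof.
move=> vD; have [_ _ cov] := P_partition; have [B BP vB] := (cov v).1 vD.
have hasB : has (fun B : {fset nat} => v \in B) P by apply/hasP; exists B.
by split; [rewrite -has_find | exact: (nth_find fset0 hasB)].
Qed.

Lemma block_in v : v \in Delta -> block v \in P.
Proof. by move=> vD; apply: mem_nth; case: (block_index_spec vD). Qed.

Lemma block_eq B v : B \in P -> v \in B -> v \in Delta -> B = block v.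
Proof.
move=> BP vB vD; have [_ disj _] := P_partition.
apply/eqP; apply: contraT => nB; have := disj _ _ BP (block_in vD) nB.
by move/fsetP/(_ v); rewrite in_fsetI vB (block_index_spec vD).2 in_fset0.
Qed.

Lemma block_index_eq v w : v \in Delta -> w \in Delta ->
  (block_index v = block_index w) <-> w \in block v.
Proof.
move=> vD wD; have [_ wbw] := block_index_spec wD; split; first by rewrite /block => ->.
move=> wbv; apply/eqP.
rewrite -(nth_uniq fset0 (block_index_spec vD).1 (block_index_spec wD).1 (fset_uniq P)).
by rewrite -/(block v) -/(block w) (block_eq (block_in vD) wbv wD).
Qed.

Lemma char_partition_join_Delta : is_char_partition n join_complex Delta P.
Proof.
have rel v w : v \in Delta -> w \in Delta -> char_rel n join_complex Delta v w <-> w \in block v.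
  move=> vD wD; rewrite (char_relE n_ge2 join_complex_type34 facet_join_Delta vD wD).
  rewrite !opposite_join_Delta // -block_index_eq //.
  by rewrite /apex; split=> [/eqP|->//]; rewrite eqn_add2l => /eqP.
have [B_ne _ cov] := P_partition.
have block_Delta v w : v \in Delta -> w \in block v -> w \in Delta.
  by move=> vD wb; apply/(cov w).2; exists (block v); rewrite ?block_in.
move=> B; split=> [BP|[v vD Bv]].
  have /fset0Pn [v vB] := B_ne _ BP; have vD : v \in Delta by apply/(cov v).2; exists B.
  exists v => // w; rewrite (block_eq BP vB vD); split=> [wb|[wD /(rel _ _ vD wD)]] //.
  by have wD := block_Delta _ _ vD wb; split=> //; apply/(rel _ _ vD wD).
have -> : B = block v.
  apply/fsetP => w; apply/idP/idP => [/Bv [wD /(rel _ _ vD wD)] //|wb].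
  by have wD := block_Delta _ _ vD wb; apply/Bv; split=> //; apply/(rel _ _ vD wD).
exact: block_in.
Qed.

End JoinComplex.

Theorem lemma2p1 (n : nat) (hn : 2 <= n) :
  (forall P : {fset {fset nat}}, is_partition (Delta n) P ->
     exists K : {fset nat} -> Prop,
       [/\ scc34 n K, facet n K (Delta n) & is_char_partition n K (Delta n) P])
  /\
  (forall (P : {fset {fset nat}}) (K1 K2 : {fset nat} -> Prop),
     is_partition (Delta n) P ->
     scc34 n K1 -> facet n K1 (Delta n) -> is_char_partition n K1 (Delta n) P ->
     scc34 n K2 -> facet n K2 (Delta n) -> is_char_partition n K2 (Delta n) P ->
     exists f : nat -> nat,
       complex_iso K1 K2 f /\ (forall i, i \in Delta n -> f i = i))
  /\
  (forall (V : choiceType) (K : {fset V} -> Prop) (D1 D2 : {fset V})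
          (P1 P2 : {fset {fset V}}),
     scc34 n K -> facet n K D1 -> facet n K D2 ->
     is_char_partition n K D1 P1 -> is_char_partition n K D2 P2 ->
     perm_eq [seq #|` B| | B <- P1] [seq #|` B| | B <- P2]).
Proof.
split; [|split].
- move=> P HP; exists (join_complex n P); split.
  + split; [exact: join_complex_type34 | exact: join_complex_strongly_connected].
  + exact: facet_join_Delta.
  + exact: char_partition_join_Delta.
- by move=> P K1 K2 _; apply: char_partition_iso.
- by move=> V K D1 D2 P1 P2 [K34 SC]; apply: perm_char_partitions_card.
Qed.
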